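(* Let $x,y,z$ be nodes of a finite, connected, unweighted, undirected graph, and suppose some node $c$ is a Condorcet winner for $\{x,y,z\}$. Then $c$ is the unique generalized median of $\{x,y,z\}$.
   Context: $d$ is the shortest-path distance. A node $c$ is a Condorcet winner for a set $S$ if for every other node $y'$, $\lvert\{u\in S: d(u,c)<d(u,y')\}\rvert > \lvert\{u\in S: d(u,y')<d(u,c)\}\rvert$. A generalized median of $\{x,y,z\}$ is a node minimizing $d(u,x)+d(u,y)+d(u,z)$ over all nodes $u$. *)

From mathcomp Require Import all_boot.
Set Implicit Arguments. Unset Strict Implicit. Unset Printing Implicit Defensive.

Definition simple_graph (T : finType) (e : rel T) : Prop :=
  symmetric e /\ irreflexive e.

Definition connected_graph (T : finType) (e : rel T) : Prop :=
  forall u v : T, connect e u v.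

Definition within (T : finType) (e : rel T) (n : nat) (u v : T) : bool :=
  [exists k : 'I_n.+1, exists p : k.-tuple T, path e u p && (last u p == v)].

(* Shortest-path distance: least n (< #|T|) with v reachable within n steps.
   In a connected graph this is the usual hop distance. *)
Definition dist (T : finType) (e : rel T) (u v : T) : nat :=
  find (fun n => within e n u v) (iota 0 #|T|).

Definition condorcet_winner (T : finType) (e : rel T) (S : {set T}) (c : T) : Prop :=
  forall y' : T, y' != c ->
    #|[set u in S | dist e u c < dist e u y']| > #|[set u in S | dist e u y' < dist e u c]|.

Definition median_cost (T : finType) (e : rel T) (x y z u : T) : nat :=
  dist e u x + dist e u y + dist e u z.

Definition gen_median (T : finType) (e : rel T) (x y z u : T) : Prop :=
  forall w : T, median_cost e x y z u <= median_cost e x y z w.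

(* A Condorcet winner c of three voters lies on a geodesic between any two of
   them, a and b: otherwise the point w of a shortest a-b path at distance
   min(d(a,c), d(a,b)) from a is preferred to c by a or b, while only the third
   voter can prefer c to w.  Lying on all three geodesics makes the cost of c
   equal to half the perimeter d(x,y) + d(y,z) + d(x,z), which by the triangle
   inequality is a lower bound for every cost; any other minimiser is also on
   all three geodesics, hence at the same distances from x, y, z as c, and no
   voter prefers c to it. *)

From mathcomp Require Import all_boot zify.

Set Implicit Arguments. Unset Strict Implicit. Unset Printing Implicit Defensive.

Section GraphDistance.
Variables (T : finType) (e : rel T).

Local Notation d := (dist e).

Lemma withinP n u v :
  reflect (exists p : seq T, [/\ size p <= n, path e u p & last u p = v])
          (within e n u v).
Proof.
apply: (iffP existsP) => [[k /existsP[p /andP[ep /eqP lastp]]]|[p [sz ep lastp]]].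
  by exists p; rewrite size_tuple -ltnS ltn_ord.
have sz' : size p < n.+1 by [].
by exists (Ordinal sz'); apply/existsP; exists (in_tuple p); rewrite ep lastp eqxx.
Qed.

Hypothesis e_sym : symmetric e.
Hypothesis e_connected : forall u v : T, connect e u v.

Lemma has_within u v : has (fun n => within e n u v) (iota 0 #|T|).
Proof.
have /connectP[p ep lastp] := e_connected u v.
case: (shortenP ep) lastp => q eq uniq_q _ lastq.
have card_q : size (u :: q) <= #|T| by rewrite -(card_uniqP uniq_q) max_card.
apply/hasP; exists (size q); first by rewrite mem_iota; move: card_q => /=; lia.
by apply/withinP; exists q.
Qed.

Lemma dist_lt u v : d u v < #|T|.
Proof. by have := has_within u v; rewrite has_find size_iota. Qed.

Lemma dist_within u v : within e (d u v) u v.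
Proof.
have := nth_find 0 (has_within u v).
by rewrite nth_iota ?size_iota ?add0n //; apply: dist_lt.
Qed.

Lemma dist_walk u v :
  exists p : seq T, [/\ size p <= d u v, path e u p & last u p = v].
Proof. exact/withinP/dist_within. Qed.

Lemma dist_le_walk n u v p :
  size p <= n -> path e u p -> last u p = v -> d u v <= n.
Proof.
move=> sz ep lastp; have wn : within e n u v by apply/withinP; exists p.
case: (ltnP n #|T|) => [n_lt_T|]; last by have := dist_lt u v; lia.
rewrite leqNgt; apply/negP => lt_n_d.
by have := before_find 0 lt_n_d; rewrite nth_iota // add0n wn.
Qed.

Lemma dist_triangle u v w : d u w <= d u v + d v w.
Proof.
have [p [szp ep lastp]] := dist_walk u v.
have [q [szq eq lastq]] := dist_walk v w.
apply: (@dist_le_walk _ _ _ (p ++ q)); first by rewrite size_cat; lia.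
  by rewrite cat_path ep lastp eq.
by rewrite last_cat lastp lastq.
Qed.

Lemma rev_walk u p : path e u p ->
  exists q : seq T, [/\ size q = size p, path e (last u p) q & last (last u p) q = u].
Proof.
elim: p u => [|a p IHp] u /=; first by exists [::].
case/andP=> eua /IHp[q [szq eq lastq]].
exists (rcons q u); rewrite size_rcons szq rcons_path eq lastq last_rcons.
by rewrite e_sym.
Qed.

Lemma distC u v : d u v = d v u.
Proof.
suff dist_le u' v' : d u' v' <= d v' u' by apply/eqP; rewrite eqn_leq !dist_le.
have [p [szp ep lastp]] := dist_walk v' u'.
have [q [szq eq lastq]] := rev_walk ep.
by rewrite lastp in eq lastq; apply: (dist_le_walk _ eq lastq); rewrite szq.
Qed.

Lemma dist_split u v k : k <= d u v ->
  exists w, d u w <= k /\ d w v <= d u v - k.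
Proof.
move=> le_k_d; have [p [szp ep lastp]] := dist_walk u v.
rewrite -(cat_take_drop k p) cat_path in ep; case/andP: ep => ep1 ep2.
exists (last u (take k p)); split.
  by apply: (dist_le_walk _ ep1) => //; rewrite size_take; case: ifP; lia.
apply: (dist_le_walk _ ep2); first by rewrite size_drop; lia.
by rewrite -last_cat cat_take_drop.
Qed.

Lemma condorcet_winner_between (S : {set T}) a b v c :
  condorcet_winner e S c -> a \in S -> b \in S -> S \subset [set a; b; v] ->
  d a c + d c b = d a b.
Proof.
move=> cw_c Sa Sb sub_S; apply/eqP; rewrite eqn_leq dist_triangle andbT leqNgt.
apply/negP => off_geodesic.
have [w [daw dwb]] := dist_split (geq_minr (d a c) (d a b)).
have dbw : d b w < d b c.
  rewrite [d b w]distC [d b c]distC.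
  by have := dist_triangle a b c; rewrite [d b c]distC; lia.
have dwc : w != c by apply: contraTneq dbw => ->; rewrite ltnn.
have prefer_c : #|[set u in S | d u c < d u w]| <= 1.
  rewrite -(cards1 v); apply: subset_leq_card; apply/subsetP => u.
  rewrite !inE => /andP[/(subsetP sub_S)]; rewrite !inE -orbA.
  by case/or3P=> /eqP-> ?; rewrite ?eqxx //; lia.
have prefer_w : 0 < #|[set u in S | d u w < d u c]|.
  apply/card_gt0P; case: (ltnP (d a w) (d a c)) => [daw_lt|].
    by exists a; rewrite inE Sa.
  by exists b; rewrite inE Sb /= distC [d b c]distC; lia.
by have := cw_c w dwc; lia.
Qed.

Lemma condorcet_winner_eq_dist (S : {set T}) c u :
  condorcet_winner e S c -> {in S, forall v, d v u = d v c} -> u = c.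
Proof.
move=> cw_c eq_dist; apply/eqP/negPn/negP => /cw_c.
suff -> : [set v in S | d v c < d v u] = set0 by rewrite cards0.
apply/setP => v; rewrite !inE.
by case: (boolP (v \in S)) => // /eq_dist->; rewrite ltnn.
Qed.

Definition on_geodesics (x y z u : T) :=
  [/\ d x u + d u y = d x y, d x u + d u z = d x z & d y u + d u z = d y z].

Variables x y z : T.

Lemma condorcet_winner_on_geodesics c :
  condorcet_winner e [set x; y; z] c -> on_geodesics x y z c.
Proof.
move=> cw_c.
have in3 v : v \in [set x; y; z] -> v \in [set x; z; y] /\ v \in [set y; z; x].
  by rewrite !inE -orbA => /or3P[] ->; rewrite ?orbT.
have between a b v := @condorcet_winner_between _ a b v c cw_c.
split; [apply: (between _ _ z) | apply: (between _ _ y) | apply: (between _ _ x)];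
  rewrite ?inE ?eqxx ?orbT //; by apply/subsetP => v /[dup] /in3[? ?].
Qed.

Lemma perimeter_le_median_cost u :
  d x y + d x z + d y z <= 2 * median_cost e x y z u.
Proof.
rewrite /median_cost; move: (distC u x) (distC u y) (distC u z).
move: (dist_triangle x u y) (dist_triangle x u z) (dist_triangle y u z); lia.
Qed.

Lemma median_cost_on_geodesics u : on_geodesics x y z u ->
  2 * median_cost e x y z u = d x y + d x z + d y z.
Proof.
by case; rewrite /median_cost; move: (distC u x) (distC u y) (distC u z); lia.
Qed.

Lemma on_geodesics_gen_median u : on_geodesics x y z u -> gen_median e x y z u.
Proof.
move=> /median_cost_on_geodesics cost_u w.
by have := perimeter_le_median_cost w; lia.
Qed.

Lemma gen_median_on_geodesics u c : on_geodesics x y z c ->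
  gen_median e x y z u -> on_geodesics x y z u.
Proof.
move=> /median_cost_on_geodesics cost_c /(_ c); rewrite /median_cost in cost_c *.
move: (distC u x) (distC u y) (distC u z).
move: (dist_triangle x u y) (dist_triangle x u z) (dist_triangle y u z).
by move=> *; split; lia.
Qed.

Lemma on_geodesics_dist u c : on_geodesics x y z u -> on_geodesics x y z c ->
  [/\ d x u = d x c, d y u = d y c & d z u = d z c].
Proof.
case=> ? ? ? [? ? ?]; rewrite [d z u]distC [d z c]distC.
by move: (distC u y) (distC c y) => *; split; lia.
Qed.

End GraphDistance.

Theorem lemmaE2 (T : finType) (e : rel T) (x y z c : T) :
  simple_graph e -> connected_graph e ->
  condorcet_winner e [set x; y; z] c ->
  gen_median e x y z c /\ (forall u : T, gen_median e x y z u -> u = c).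
Proof.
move=> [e_sym _] e_connected cw_c.
have geo_c := condorcet_winner_on_geodesics e_sym e_connected cw_c.
split; first exact: on_geodesics_gen_median.
move=> u /(gen_median_on_geodesics e_sym e_connected geo_c) geo_u.
have [ux uy uz] := on_geodesics_dist e_sym e_connected geo_u geo_c.
by apply: (condorcet_winner_eq_dist cw_c) => v; rewrite !inE -orbA => /or3P[] /eqP->.
Qed.
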